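(* Let $t$ be a positive integer and $\mathbf v$ a good vector with respect to $t$. The code $\mathcal C$ of Construction C built from $\mathbf v$ is an $(n,(t+1)n,2t+1,n)$-PIR array code over $\mathbb{F}_q$, where $n=4t+1$ if $\mathbf v$ has length $2t$ and $n=4t+2$ if $\mathbf v$ has length $2t+1$.
   Context: Fix a finite field $\mathbb{F}_q$. Good vector: for a positive integer $t$, a vector $\mathbf v=(v_1,\dots,v_{2t})\in[t]^{2t}$ or $\mathbf v\in\{0,\dots,t\}^{2t+1}$ is good w.r.t. $t$ if every $j\in[t]$ appears exactly twice in $\mathbf v$ and whenever $v_i=v_{i'}=j\in[t]$ with $i<i'$ then $i'-i=j$; for $j\in[t]$ let $j(\mathbf v)=\max\{i:v_i=j\}$. Construction C: let $n=4t+1$ if $|\mathbf v|=2t$ and $n=4t+2$ if $|\mathbf v|=2t+1$; all indices are taken modulo $n$ with representatives in $[n]$. For $\mathbf x=(x_1,\dots,x_n)\in\mathbb{F}_q^n$, $i\in[n]$, $j\in[t]$, put $y_{i,j}=x_{i-t-j(\mathbf v)}+x_{i-t-j(\mathbf v)+j}$, and define $\mathcal C(\mathbf x)=(\mathbf c_1,\dots,\mathbf c_n)$ with $\mathbf c_i=(x_i,y_{i,1},\dots,y_{i,t})$. An $(n,N,k,m)$-PIR array code over $\mathbb{F}_q$ is an $\mathbb{F}_q$-linear map $\mathbf x\mapsto(\mathbf c_1,\dots,\mathbf c_m)$ with buckets $\mathbf c_\ell\in\mathbb{F}_q^{N_\ell}$, $N_\ell\ge1$, $\sum_\ell N_\ell=N$,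 such that for each $i\in[n]$ there is a partition of $[m]$ into $k$ sets $R_1,\dots,R_k$ such that for each $j$, $x_i$ is an $\mathbb{F}_q$-linear combination of values $f_\ell(\mathbf c_\ell)$, $\ell\in R_j$, for some linear functionals $f_\ell$ (independent of $\mathbf x$). *)

From mathcomp Require Import all_boot all_order all_algebra.
Set Implicit Arguments. Unset Strict Implicit. Unset Printing Implicit Defensive.
Import GRing.Theory.
Local Open Scope ring_scope.

(** Good vector w.r.t. t (entries are nats; positions 0-based in the seq,
    differences of positions are the same as with 1-based positions). *)
Definition good_vector (t : nat) (v : seq nat) : Prop :=
  ((size v = (2 * t)%N /\ all (fun a => (1 <= a <= t)%N) v) \/
   (size v = (2 * t + 1)%N /\ all (fun a => (a <= t)%N) v)) /\
  (forall j : nat, (1 <= j <= t)%N -> count_mem j v = 2%N) /\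
  (forall (i i' j : nat), (i < i' < size v)%N -> (1 <= j <= t)%N ->
      nth 0%N v i = j -> nth 0%N v i' = j -> (i' - i)%N = j).

Definition jpos (v : seq nat) (j : nat) : nat :=
  \max_(i < size v | nth 0%N v i == j) i.+1.

Definition nC (t : nat) (v : seq nat) : nat :=
  if size v == (2 * t)%N then (4 * t + 1)%N else (4 * t + 2)%N.

Lemma nC_gt0 t v : (0 < nC t v)%N.
Proof. by rewrite /nC; case: ifP => _; rewrite ?addn1 ?addn2. Qed.

Definition modC (t : nat) (v : seq nat) (k : nat) : 'I_(nC t v) :=
  Ordinal (ltn_pmod k (nC_gt0 t v)).

(** Paper index i in [n] corresponds to the ordinal i-1.
    The paper's index  i - t - j(v)  (mod n, rep. in [n]) is, 0-based,
    (i0 + n - (t + j(v))) mod n, and i - t - j(v) + j is that plus j. *)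
Definition yC (F : fieldType) (t : nat) (v : seq nat)
    (x : 'rV[F]_(nC t v)) (i0 : 'I_(nC t v)) (j : nat) : F :=
  let b := (i0 + nC t v - (t + jpos v j))%N in
  x 0 (modC t v b) + x 0 (modC t v (b + j)).

Definition constructionC (F : fieldType) (t : nat) (v : seq nat)
    (i0 : 'I_(nC t v)) (x : 'rV[F]_(nC t v)) : 'rV[F]_t.+1 :=
  \row_(j < t.+1) (if j == ord0 then x 0 i0 else yC x i0 j).

Definition is_PIR_array_code (F : fieldType) (n N k m : nat)
    (Ns : 'I_m -> nat) (enc : forall l : 'I_m, 'rV[F]_n -> 'rV[F]_(Ns l)) : Prop :=
  (forall l (a : F) (u w : 'rV[F]_n), enc l (a *: u + w) = a *: enc l u + enc l w) /\
  (forall l, (0 < Ns l)%N) /\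
  (\sum_(l < m) Ns l)%N = N /\
  (forall i : 'I_n, exists P : {set {set 'I_m}},
      partition P [set: 'I_m] /\ #|P| = k /\
      forall R, R \in P ->
        exists (f : forall l : 'I_m, 'cV[F]_(Ns l)) (a : 'I_m -> F),
          forall x : 'rV[F]_n,
            x 0 i = \sum_(l in R) a l * (enc l x *m f l) 0 0).

Arguments is_PIR_array_code : clear implicits.
Arguments constructionC : clear implicits.

From mathcomp Require Import all_boot all_order all_algebra.
From mathcomp Require Import zify ring.
Set Implicit Arguments. Unset Strict Implicit. Unset Printing Implicit Defensive.
Import GRing.Theory.

(* Index the buckets by their offset d = l - i (mod n) from the requested
   coordinate i.  Bucket i itself stores x_i.  For 1 <= j <= t the two
   occurrences of j in v, at (1-based) positions j(v) - j and j(v), give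
   y_{i+t+j(v), j} = x_i + x_{i+j} and y_{i+t+j(v)-j, j} = x_{i-j} + x_i, so x_i
   is recovered from the offsets {j, t + j(v)} and from {n - j, t + j(v) - j}.
   Together with {0} (plus the unused offsets t + p with v_p = 0) these 2t+1
   sets partition the n offsets, since n = 2t + |v| + 1. *)

Lemma count_mem_gt1 (T : eqType) (x0 x : T) (s : seq T) : 1 < count_mem x s ->
  exists q1 q2, q1 < q2 < size s /\ nth x0 s q1 = x /\ nth x0 s q2 = x.
Proof.
elim: s => [|y s IHs] //=; case: (y =P x) => [->|_] /= count_gt1.
  have xs : x \in s by rewrite -has_pred1 has_count -ltnS -add1n.
  by exists 0, (index x s).+1; rewrite /= ltnS index_mem nth_index.
have [q1 [q2 [lt_q [nth1 nth2]]]] := IHs count_gt1.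
by exists q1.+1, q2.+1.
Qed.

Lemma jpos_max (v : seq nat) j q : q < size v -> nth 0 v q = j -> q < jpos v j.
Proof.
move=> lt_q vq; rewrite /jpos.
exact: (@leq_bigmax_cond _ (fun p : 'I_(size v) => nth 0 v p == j)
   (fun p : 'I_(size v) => (p : nat).+1) (Ordinal lt_q) (introT eqP vq)).
Qed.

Lemma jpos_witness (v : seq nat) j q : q < size v -> nth 0 v q = j ->
  exists2 p, p < size v & nth 0 v p = j /\ jpos v j = p.+1.
Proof.
move=> lt_q vq; rewrite /jpos (bigmax_eq_arg (Ordinal lt_q)) /=; last exact/eqP.
by case: arg_maxnP => [|p /eqP vp _]; [exact/eqP | exists p].
Qed.

Section GoodVector.

Variables (t : nat) (v : seq nat).
Hypothesis gv : good_vector t v.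

Lemma nC_good : nC t v = 2 * t + size v + 1.
Proof.
by case: gv => -[[size_v _]|[size_v _]] _; rewrite /nC size_v; case: eqP; lia.
Qed.

Lemma nth_good_le p : p < size v -> nth 0 v p <= t.
Proof.
case: gv => -[[_ /allP v_le]|[_ /allP v_le]] _ lt_p; have := v_le _ (mem_nth 0 lt_p) => //.
by case/andP.
Qed.

Lemma jpos_spec j : 1 <= j <= t ->
  [/\ j < jpos v j <= size v, nth 0 v (jpos v j).-1 = j,
      nth 0 v ((jpos v j).-1 - j) = j &
      forall q, q < size v -> nth 0 v q = j ->
         q = (jpos v j).-1 \/ q = (jpos v j).-1 - j].
Proof.
case: gv => _ [count2 gap] j_range.
have count_gt1 : 1 < count_mem j v by rewrite count2.
have [q1 [q2 [/andP[lt12 lt2] [vq1 vq2]]]] := count_mem_gt1 0 count_gt1.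
have [p lt_p [vp jposE]] := jpos_witness (ltn_trans lt12 lt2) vq1.
have occ q : q < size v -> nth 0 v q = j ->
    q = (jpos v j).-1 \/ q = (jpos v j).-1 - j.
  move=> lt_q vq; have := jpos_max lt_q vq; rewrite jposE ltnS leq_eqVlt.
  case/orP=> [/eqP->|lt_qp]; first by left.
  by right; have := gap q p j; rewrite lt_qp lt_p j_range => /(_ isT isT vq vp); lia.
have gap12 : q2 - q1 = j by apply: gap => //; rewrite lt12.
have := occ _ (ltn_trans lt12 lt2) vq1; have := occ _ lt2 vq2.
rewrite jposE /= => occ2 occ1; split => //.
- by rewrite lt_p andbT; lia.
- by case: occ1 => [eq1|<-] //; case: occ2 => [eq2|<-] //; lia.
- by move: occ; rewrite jposE.
Qed.

End GoodVector.

Lemma label_partition (T : finType) k (h : T -> nat) :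
  (forall l, h l < k) -> (forall c, c < k -> exists l, h l = c) ->
  partition [set [set l | h l == c] | c : 'I_k] [set: T] /\
  #|[set [set l | h l == c] | c : 'I_k]| = k.
Proof.
move=> h_lt h_onto; set P := [set _ | c : 'I_k].
have class_inj : injective (fun c : 'I_k => [set l | h l == c]).
  move=> c1 c2 /setP eq12; have [l hl] := h_onto c1 (ltn_ord c1).
  by apply: val_inj; move: (eq12 l); rewrite !inE hl eqxx => /esym/eqP.
have P_set0 : set0 \notin P.
  apply/imsetP => -[c _ empty]; have [l hl] := h_onto c (ltn_ord c).
  by have := in_set0 l; rewrite empty inE hl eqxx.
split; last by rewrite card_imset // card_ord.
rewrite /partition P_set0 andbT; apply/andP; split.
  apply/eqP/setP => l; rewrite inE; apply/bigcupP.
  by exists [set l' | h l' == h l]; [apply/imsetP; exists (Ordinal (h_lt l)) | rewrite inE].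
apply/trivIsetP => _ _ /imsetP[c1 _ ->] /imsetP[c2 _ ->] ne12.
rewrite -setI_eq0; apply/eqP/setP => l; rewrite !inE.
apply/andP => -[/eqP h1 /eqP h2]; case/eqP: ne12.
by have -> : c1 = c2 by apply: val_inj; rewrite /= -h1 -h2.
Qed.

Lemma big_pred2 (R : Type) (idx : R) (op : Monoid.com_law idx) (I : finType)
    (a b : I) (P : pred I) (F : I -> R) :
  a != b -> P =1 pred2 a b -> \big[op/idx]_(l | P l) F l = op (F a) (F b).
Proof.
move=> neq_ab eqP2; have Pa : P a by rewrite eqP2 /= eqxx.
rewrite (bigD1 a) // (big_pred1 b) // => l /=.
by rewrite eqP2 /=; case: (l =P a) => [->|]; rewrite ?(negbTE neq_ab) ?andbF ?andbT.
Qed.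

Section RecoveryLabel.

Variables (t : nat) (v : seq nat).
Hypothesis gv : good_vector t v.

(* The label of offset d is 2j-1 on {j, t + j(v)}, 2j on {n - j, t + j(v) - j},
   and 0 elsewhere. *)
Definition recovery_label (d : nat) : nat :=
  if d == 0 then 0
  else if d <= t then 2 * d - 1
  else if d <= t + size v then
    (if nth 0 v (d - t - 1) == 0 then 0
     else if d - t == jpos v (nth 0 v (d - t - 1)) then 2 * nth 0 v (d - t - 1) - 1
     else 2 * nth 0 v (d - t - 1))
  else 2 * (nC t v - d).

Lemma recovery_label_mid_spec j d : 1 <= j <= t -> t < d <= t + size v ->
  [/\ nth 0 v (d - t - 1) <= t,
      nth 0 v (d - t - 1) = j -> d = t + jpos v j \/ d = t + jpos v j - j,
      d = t + jpos v j -> nth 0 v (d - t - 1) = j &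
      d = t + jpos v j - j -> nth 0 v (d - t - 1) = j].
Proof.
move=> j_range d_mid; have [jpos_range vjpos vjpos_sub occ] := jpos_spec gv j_range.
split.
- apply: (nth_good_le gv); lia.
- by move=> vj; have := occ (d - t - 1); rewrite vj; lia.
- by move=> ->; rewrite -[RHS]vjpos; congr nth; lia.
- by move=> ->; rewrite -[RHS]vjpos_sub; congr nth; lia.
Qed.

Lemma recovery_label_odd j d : 1 <= j <= t -> d < nC t v ->
  recovery_label d = 2 * j - 1 <-> d = j \/ d = t + jpos v j.
Proof.
move=> j_range lt_d; have [jpos_range _ _ _] := jpos_spec gv j_range.
rewrite /recovery_label; rewrite (nC_good gv) in lt_d *.
case: (d =P 0) => [->|d_neq0]; first lia.
case: (leqP d t) => [d_le|t_lt]; first lia.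
case: (leqP d (t + size v)) => [d_le|]; last lia.
have [] := @recovery_label_mid_spec j d j_range; first by rewrite t_lt d_le.
move: (nth 0 v _) => j' le_t occj posj posj'.
case: (j' =P j) => [eq_j|ne_j]; first by rewrite eq_j; case: (j =P 0); case: (d - t =P jpos v j); lia.
by case: (j' =P 0); case: (d - t =P jpos v j'); lia.
Qed.

Lemma recovery_label_even j d : 1 <= j <= t -> d < nC t v ->
  recovery_label d = 2 * j <-> d = nC t v - j \/ d = t + jpos v j - j.
Proof.
move=> j_range lt_d; have [jpos_range _ _ _] := jpos_spec gv j_range.
rewrite /recovery_label; rewrite (nC_good gv) in lt_d *.
case: (d =P 0) => [->|d_neq0]; first lia.
case: (leqP d t) => [d_le|t_lt]; first lia.
case: (leqP d (t + size v)) => [d_le|]; last lia.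
have [] := @recovery_label_mid_spec j d j_range; first by rewrite t_lt d_le.
move: (nth 0 v _) => j' le_t occj posj posj'.
case: (j' =P j) => [eq_j|ne_j]; first by rewrite eq_j; case: (j =P 0); case: (d - t =P jpos v j); lia.
by case: (j' =P 0); case: (d - t =P jpos v j'); lia.
Qed.

Lemma recovery_label_zero d : d < nC t v -> recovery_label d = 0 ->
  d = 0 \/ t < d <= t + size v /\ nth 0 v (d - t - 1) = 0.
Proof.
rewrite /recovery_label (nC_good gv) => lt_d.
case: (d =P 0) => [|d_neq0]; first by left.
case: (leqP d t) => [d_le|t_lt]; first lia.
case: (leqP d (t + size v)) => [d_le|]; last lia.
by case: (_ =P 0) => [vd0 _|_]; [right | case: ifP; lia].
Qed.

Lemma recovery_label_lt d : d < nC t v -> recovery_label d < 2 * t + 1.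
Proof.
rewrite /recovery_label (nC_good gv) => lt_d.
case: (d =P 0) => [|d_neq0]; first lia.
case: (leqP d t) => [d_le|t_lt]; first lia.
case: (leqP d (t + size v)) => [d_le|]; last lia.
have := @nth_good_le _ _ gv (d - t - 1); move: (nth 0 v _) => j'.
by case: ifP; [lia | case: ifP; lia].
Qed.

Lemma recovery_label_onto c : c < 2 * t + 1 ->
  exists2 d, d < nC t v & recovery_label d = c.
Proof.
rewrite (nC_good gv) => lt_c.
have [->|c_neq0] := eqVneq c 0; first by exists 0; rewrite ?addn1.
have [j [j_range [oddc|evenc]]] : exists j, 1 <= j <= t /\ (c = 2 * j - 1 \/ c = 2 * j).
  by exists (c.+1 %/ 2); lia.
- exists j; first lia.
  by rewrite oddc; apply/(recovery_label_odd j_range); [rewrite (nC_good gv); lia | left].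
- exists (nC t v - j); first by rewrite (nC_good gv); lia.
  by rewrite evenc; apply/(recovery_label_even j_range); [rewrite (nC_good gv); lia | left].
Qed.

End RecoveryLabel.

Section Rotation.

Variables (t : nat) (v : seq nat) (i : 'I_(nC t v)).

Definition rot (d : nat) : 'I_(nC t v) := modC t v (i + d).

Definition offset (l : 'I_(nC t v)) : nat := (l + nC t v - i) %% nC t v.

Lemma rot0 : rot 0 = i.
Proof. by apply: val_inj; rewrite /= addn0 modn_small. Qed.

Lemma rotDn d : rot (d + nC t v) = rot d.
Proof. by apply: val_inj; rewrite /= addnA modnDr. Qed.

Lemma offset_lt l : offset l < nC t v.
Proof. by rewrite ltn_mod nC_gt0. Qed.

Lemma offset_rot d : d < nC t v -> offset (rot d) = d.
Proof.
move=> lt_d; rewrite /offset /= -addnBA ?modnDml; last exact: ltnW.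
have -> : i + d + (nC t v - i) = d + nC t v by have := ltn_ord i; lia.
by rewrite modnDr modn_small.
Qed.

Lemma rot_offset l : rot (offset l) = l.
Proof.
apply: val_inj; rewrite /= modnDmr.
have -> : i + (l + nC t v - i) = l + nC t v by have := ltn_ord i; lia.
by rewrite modnDr modn_small.
Qed.

Lemma offset_eqE l d : d < nC t v -> (offset l == d) = (l == rot d).
Proof.
move=> lt_d; apply/eqP/eqP => [<-|->]; [exact/esym/rot_offset | exact: offset_rot].
Qed.

Lemma pred2_rot (P : pred 'I_(nC t v)) d1 d2 :
  d1 < nC t v -> d2 < nC t v ->
  (forall l, P l <-> offset l = d1 \/ offset l = d2) -> P =1 pred2 (rot d1) (rot d2).
Proof.
move=> lt_d1 lt_d2 PE l; rewrite /= -!offset_eqE //; apply/idP/orP.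
  by case/PE => ->; [left | right].
by case=> /eqP off_l; apply/PE; [left | right].
Qed.

End Rotation.

Definition repair_coef (F : fieldType) t v (d : nat) : F :=
  if d == 0 then 1%R
  else if t < d <= t + size v then (if nth 0 v (d - t - 1) == 0 then 0%R else 1%R)
  else (-1)%R.

Definition repair_column t v (d : nat) : nat :=
  if t < d <= t + size v then nth 0 v (d - t - 1) else 0.

Local Open Scope ring_scope.

Lemma yC_rot (F : fieldType) t v (x : 'rV[F]_(nC t v)) i d j :
  (t + jpos v j <= nC t v)%N ->
  yC x (rot i d) j = x 0 (rot i (d + nC t v - (t + jpos v j))%N)
                   + x 0 (rot i (d + nC t v - (t + jpos v j) + j)%N).
Proof.
move=> le_n; rewrite /yC /rot; congr (x 0 _ + x 0 _); apply: val_inj;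
  rewrite /= -!addnBA //; first by rewrite modnDml addnA.
by rewrite -addnA modnDml !addnA.
Qed.

Lemma constructionC_entry (F : fieldType) t v l (x : 'rV[F]_(nC t v)) c : (c <= t)%N ->
  constructionC F t v l x 0 (inord c) = if c == 0%N then x 0 l else yC x l c.
Proof.
by move=> le_c; rewrite /constructionC mxE -val_eqE /= inordK.
Qed.

Lemma constructionC_linear (F : fieldType) t v l a (u w : 'rV[F]_(nC t v)) :
  constructionC F t v l (a *: u + w) = a *: constructionC F t v l u + constructionC F t v l w.
Proof.
by apply/rowP => k; rewrite !mxE; case: ifP => _; rewrite /yC ?mxE //; ring.
Qed.

Section Recovery.

Variables (F : fieldType) (t : nat) (v : seq nat).
Hypothesis gv : good_vector t v.
Variables (i : 'I_(nC t v)) (x : 'rV[F]_(nC t v)).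

Definition repair_term (l : 'I_(nC t v)) : F :=
  repair_coef F t v (offset i l) * constructionC F t v l x 0 (inord (repair_column t v (offset i l))).

Lemma repair_term_origin : repair_term i = x 0 i.
Proof.
have off0 : offset i i = 0%N by rewrite -{2}(rot0 i) offset_rot ?nC_gt0.
by rewrite /repair_term off0 constructionC_entry // mul1r.
Qed.

Lemma repair_term_outer d : (d < nC t v)%N -> d != 0%N -> ~~ (t < d <= t + size v)%N ->
  repair_term (rot i d) = - x 0 (rot i d).
Proof.
move=> lt_d d_neq0 not_mid; rewrite /repair_term offset_rot // /repair_coef /repair_column.
by rewrite (negbTE d_neq0) (negbTE not_mid) constructionC_entry // mulN1r.
Qed.

Lemma repair_term_inner d : (d < nC t v)%N -> (t < d <= t + size v)%N ->
  repair_term (rot i d) =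
    if nth 0%N v (d - t - 1) == 0%N then 0 else yC x (rot i d) (nth 0%N v (d - t - 1)).
Proof.
move=> lt_d mid; rewrite /repair_term offset_rot // /repair_coef /repair_column mid.
have -> : (d == 0%N) = false by apply/eqP; lia.
case: eqP => [_|vd_neq0]; first by rewrite mul0r.
rewrite mul1r constructionC_entry; last by apply: (nth_good_le gv); lia.
by case: eqP.
Qed.

Lemma recovery_sum_zero :
  \sum_(l | recovery_label t v (offset i l) == 0%N) repair_term l = x 0 i.
Proof.
have off0 : offset i i = 0%N by rewrite -{2}(rot0 i) offset_rot ?nC_gt0.
rewrite (bigD1 i) /=; last by rewrite off0.
rewrite big1 ?addr0 ?repair_term_origin // => l /andP[/eqP label0 l_neq_i].
have [off_l0|[mid vl0]] := recovery_label_zero gv (offset_lt i l) label0.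
  by case/eqP: l_neq_i; rewrite -(rot_offset i l) off_l0 rot0.
by rewrite -(rot_offset i l) repair_term_inner ?offset_lt // vl0 eqxx.
Qed.

Lemma recovery_sum_odd j : (1 <= j <= t)%N ->
  \sum_(l | recovery_label t v (offset i l) == (2 * j - 1)%N) repair_term l = x 0 i.
Proof.
move=> j_range; have [jpos_range vjpos _ _] := jpos_spec gv j_range.
have n_eq := nC_good gv.
have lt_j : (j < nC t v)%N by lia.
have lt_last : (t + jpos v j < nC t v)%N by lia.
rewrite (@big_pred2 _ _ _ _ (rot i j) (rot i (t + jpos v j)%N)); first last.
- apply: pred2_rot => // l; rewrite -(rwP eqP).
  exact: (recovery_label_odd gv j_range (offset_lt i l)).
- by rewrite -offset_eqE // offset_rot //; apply/eqP; lia.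
rewrite repair_term_outer ?repair_term_inner //; try (apply/negP; lia).
have -> : (t + jpos v j - t - 1 = (jpos v j).-1)%N by lia.
rewrite vjpos (_ : j == 0%N = false); last by apply/eqP; lia.
rewrite yC_rot; last lia.
have -> : (t + jpos v j + nC t v - (t + jpos v j) = 0 + nC t v)%N by lia.
by rewrite addnAC !rotDn rot0 add0n /= addrC addrK.
Qed.

Lemma recovery_sum_even j : (1 <= j <= t)%N ->
  \sum_(l | recovery_label t v (offset i l) == (2 * j)%N) repair_term l = x 0 i.
Proof.
move=> j_range; have [jpos_range _ vjpos_sub _] := jpos_spec gv j_range.
have n_eq := nC_good gv.
have lt_neg : (nC t v - j < nC t v)%N by lia.
have lt_first : (t + jpos v j - j < nC t v)%N by lia.
rewrite (@big_pred2 _ _ _ _ (rot i (nC t v - j)%N) (rot i (t + jpos v j - j)%N)); first last.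
- apply: pred2_rot => // l; rewrite -(rwP eqP).
  exact: (recovery_label_even gv j_range (offset_lt i l)).
- by rewrite -offset_eqE // offset_rot //; apply/eqP; lia.
rewrite repair_term_outer ?repair_term_inner //; try (apply/eqP; lia); try (apply/negP; lia).
have -> : (t + jpos v j - j - t - 1 = (jpos v j).-1 - j)%N by lia.
rewrite vjpos_sub (_ : j == 0%N = false); last by apply/eqP; lia.
rewrite yC_rot; last lia.
have -> : (t + jpos v j - j + nC t v - (t + jpos v j) = nC t v - j)%N by lia.
have -> : (nC t v - j + j = 0 + nC t v)%N by lia.
by rewrite rotDn rot0 /= addKr.
Qed.

Lemma recovery_sum c : (c < 2 * t + 1)%N ->
  \sum_(l | recovery_label t v (offset i l) == c) repair_term l = x 0 i.
Proof.
move=> lt_c; have [->|c_neq0] := eqVneq c 0%N; first exact: recovery_sum_zero.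
have [j [j_range [->|->]]] : exists j, (1 <= j <= t)%N /\ (c = 2 * j - 1 \/ c = 2 * j)%N.
  by exists (c.+1 %/ 2)%N; lia.
- exact: recovery_sum_odd.
- exact: recovery_sum_even.
Qed.

End Recovery.

Theorem lemma4p6 (F : finFieldType) (t : nat) (v : seq nat) :
  (0 < t)%N -> good_vector t v ->
  is_PIR_array_code F (nC t v) ((t + 1) * nC t v) (2 * t + 1) (nC t v)
    (fun _ => t.+1) (constructionC F t v).
Proof.
move=> _ gv; split; first exact: constructionC_linear.
split=> //; split; first by rewrite sum_nat_const card_ord mulnC addn1.
move=> i; pose label l := recovery_label t v (offset i l).
have label_onto c : (c < 2 * t + 1)%N -> exists l, label l = c.
  move=> lt_c; have [d lt_d <-] := recovery_label_onto gv lt_c.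
  by exists (rot i d); rewrite /label offset_rot.
have [partP cardP] := label_partition (fun l => recovery_label_lt gv (offset_lt i l)) label_onto.
exists [set [set l | label l == c] | c : 'I_(2 * t + 1)]; do 2!split => //.
move=> _ /imsetP[c _ ->].
exists (fun l => delta_mx (inord (repair_column t v (offset i l))) 0).
exists (fun l => repair_coef F t v (offset i l)) => x.
rewrite -(recovery_sum gv i x (ltn_ord c)); apply: eq_big => [l|l _]; first by rewrite inE.
by rewrite -colE mxE.
Qed.
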